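(* Let $\Lambda=k(\Gamma,\mathcal{A})$ be a generalized path algebra without relations ($I=\emptyset$), $i\in\Gamma_0$, and $M$ a finite-dimensional right $A_i$-module. Let $((M_j)_j,(\phi_\alpha)_\alpha)$ be the representation of $\mathcal{C}_i(M)$. Then $M_i=M$, and for $j\neq i$ we have $M_j\cong A_j^{n_j}$ as $A_j$-modules, where $$n_j=\sum_{\gamma:\,i=i_0\to i_1\to\cdots\to i_{r+1}=j}(\dim_kM)(\dim_kA_{i_1})\cdots(\dim_kA_{i_r}),$$ the sum running over all paths $\gamma$ from $i$ to $j$ in $\Gamma$. In particular $M_j=0$ if there is no path from $i$ to $j$.
   Context: $k$ is an algebraically closed field, $\Gamma$ a finite acyclic quiver, and $\mathcal{A}=\{A_i:i\in\Gamma_0\}$ finite-dimensional basic $k$-algebras. The generalized path algebra $k(\Gamma,\mathcal{A})$ is spanned by $\mathcal{A}$-paths $a_1\beta_1\cdots a_n\beta_na_{n+1}$ ($\beta_1\cdots\beta_n$ a path of $\Gamma$, $a_i\in A_{s(\beta_i)}$, $a_{n+1}\in A_{e(\beta_n)}$), modulo multilinearity in each entry, with concatenation product (multiplying adjacent algebra entries, or $0$ if paths don't compose). $A_{\mathcal{A}}=\prod_jA_j\subseteq\Lambda$. An $A_i$-module $M$ is an $A_{\mathcal{A}}$-module via the projection to $A_i$. The cone is $\mathcal{C}_i(M)=M\otimes_{A_{\mathcal{A}}}\Lambda$. The representation of a right $\Lambda$-module $X$ has $X_j=X\cdot1_j$ and $\phi_\alpha(x)=x\alpha$. *)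

From HB Require Import structures.
From mathcomp Require Import all_boot all_order all_algebra.
From mathcomp Require Import falgebra.
Set Implicit Arguments. Unset Strict Implicit. Unset Printing Implicit Defensive.
Import GRing.Theory.
Local Open Scope ring_scope.

Section Quiver.
Variables (V E : finType) (s t : E -> V).

Fixpoint is_qpath (i j : V) (p : seq E) : bool :=
  match p with
  | [::] => i == j
  | b :: p' => (s b == i) && is_qpath (t b) j p'
  end.

Definition acyclic : Prop :=
  forall (v : V) (p : seq E), p != [::] -> ~~ is_qpath v v p.

(* n_j = sum over paths gamma : i = i0 -> i1 -> ... -> i_(r+1) = j of     *)
(* dM * dA(i1) * ... * dA(ir); the intermediate vertices i1..ir are the    *)
(* sources of all arrows of gamma but the first.  In an acyclic quiver     *)
(* every path has fewer than #|V| arrows, so the length bound below only   *)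
(* makes the (finite) sum over all paths explicit.                          *)
Definition ncoef (dM : nat) (dA : V -> nat) (i j : V) : nat :=
  (\sum_(r < #|V|.+1) \sum_(p : r.-tuple E | is_qpath i j p)
      (dM * \prod_(b <- behead p) dA (s b)))%N.

End Quiver.

Section Alg.
Variable k : fieldType.

Definition in_jacobson (R : falgType k) (x : R) : Prop :=
  forall a : R, (1 - a * x) \is a GRing.unit.

(* R is basic iff R / J(R) is a product of copies of k; over an             *)
(* algebraically closed field this is: R / J(R) is commutative.             *)
Definition basic (R : falgType k) : Prop :=
  forall x y : R, in_jacobson (x * y - y * x).

Record rmod (R : algType k) := RMod {
  rcar :> vectType k;
  ract : rcar -> R -> rcar;
  ract_linl : forall (r : R) (c : k) (x y : rcar),
      ract (c *: x + y) r = c *: ract x r + ract y r;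
  ract_linr : forall (x : rcar) (c : k) (r r' : R),
      ract x (c *: r + r') = c *: ract x r + ract x r';
  ract1 : forall x : rcar, ract x 1 = x;
  ractM : forall (x : rcar) (r r' : R), ract (ract x r) r' = ract x (r * r')
}.

Definition lin_map (U W : lmodType k) (f : U -> W) : Prop :=
  forall (c : k) (x y : U), f (c *: x + y) = c *: f x + f y.

Definition alg_hom (R B : algType k) (g : R -> B) : Prop :=
  lin_map g /\ (forall x y, g (x * y) = g x * g y) /\ g 1 = 1.

Definition bilin (U : lmodType k) (R : algType k) (W : lmodType k)
  (f : U -> R -> W) : Prop :=
  (forall (r : R) (c : k) (x y : U), f (c *: x + y) r = c *: f x r + f y r) /\
  (forall (x : U) (c : k) (r r' : R), f x (c *: r + r') = c *: f x r + f x r').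

End Alg.

(* The generalized path algebra k(Gamma, A) (no relations), by its          *)
(* universal property, and the cone C_i(M) = M (x)_{A_A} Lambda, by the     *)
(* universal property of the tensor product.                                *)
Section GPA.
Variables (k : fieldType) (V E : finType) (s t : E -> V) (A : V -> falgType k).

(* Data of an algebra map k(Gamma,A) -> B: multiplicative linear maps       *)
(* f v : A v -> B whose units are orthogonal idempotents summing to 1       *)
(* (i.e. an algebra map A_A = prod_v A_v -> B), and images b e of the       *)
(* arrows with b e = f (s e) 1 * b e * f (t e) 1.                           *)
Definition gpa_data (B : algType k) (f : forall v, A v -> B) (b : E -> B) : Prop :=
  (forall v, lin_map (f v)) /\
  (forall v (x y : A v), f v (x * y) = f v x * f v y) /\
  (\sum_(v : V) f v 1 = 1) /\
  (forall v w, v != w -> forall (x : A v) (y : A w), f v x * f w y = 0) /\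
  (forall e, f (s e) 1 * b e * f (t e) 1 = b e).

(* (L, emb, arr) is the generalized path algebra k(Gamma, A): emb v embeds  *)
(* A v (as the trivial A-paths at v) and arr e is the arrow e; it is the    *)
(* free algebra on these data (= tensor algebra T_{A_A}(+_e A_s(e) (x)_k    *)
(* A_t(e)), spanned by the A-paths a1 b1 a2 ... bn a(n+1)).                 *)
Definition is_gpa (L : falgType k) (emb : forall v, A v -> L) (arr : E -> L) : Prop :=
  gpa_data emb arr /\
  forall (B : algType k) (f : forall v, A v -> B) (b : E -> B),
    gpa_data f b ->
    (exists g : L -> B, alg_hom g /\ (forall v (x : A v), g (emb v x) = f v x) /\
                        (forall e, g (arr e) = b e)) /\
    (forall g1 g2 : L -> B, alg_hom g1 -> alg_hom g2 ->
       (forall v (x : A v), g1 (emb v x) = g2 (emb v x)) ->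
       (forall e, g1 (arr e) = g2 (arr e)) -> g1 =1 g2).

(* A map sigma : M x L -> W is A_A-balanced, where the A_i-module M is an   *)
(* A_A-module via the projection A_A -> A_i.                                *)
Definition balanced (L : falgType k) (emb : forall v, A v -> L) (i : V)
  (M : rmod (A i)) (W : lmodType k) (sigma : M -> L -> W) : Prop :=
  (forall (a : A i) (m : M) (l : L), sigma (ract m a) l = sigma m (emb i a * l)) /\
  (forall w, w != i -> forall (a : A w) (m : M) (l : L), sigma m (emb w a * l) = 0).

(* (X, tau) is the right L-module M (x)_{A_A} L, tau m l = m (x) l.         *)
Definition is_cone (L : falgType k) (emb : forall v, A v -> L) (i : V)
  (M : rmod (A i)) (X : rmod L) (tau : M -> L -> X) : Prop :=
  bilin tau /\ balanced emb tau /\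
  (forall (m : M) (l l' : L), tau m (l * l') = ract (tau m l) l') /\
  forall (W : lmodType k) (sigma : M -> L -> W), bilin sigma -> balanced emb sigma ->
    (exists h : X -> W, lin_map h /\ forall m l, h (tau m l) = sigma m l) /\
    (forall h1 h2 : X -> W, lin_map h1 -> lin_map h2 ->
       (forall m l, h1 (tau m l) = h2 (tau m l)) -> h1 =1 h2).

End GPA.

(* y lies in X_j = X * e, where e = 1_j. *)
Definition in_comp (k : fieldType) (L : falgType k) (X : rmod L) (e : L) (y : X) : Prop :=
  exists z : X, y = ract z e.

(* The cone C_i(M) = M (x)_{A_A} Lambda is computed against an explicit model N, the
   k-space with basis the words m (x) b_1 a_1 b_2 ... a_r b_(r+1) a, where b_1 ... b_(r+1)
   is a path from i (if it is empty the word is just m), m runs over a basis of M, each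
   a_l over a basis of the algebra at the vertex between b_l and b_(l+1), and a over a
   basis of the algebra at the end; acyclicity keeps the set of words finite.  The
   algebras and the arrows act on N by multiplying the last letter and by appending an
   arrow, so the universal property of Lambda makes N a right Lambda-module, and the one
   of the tensor product gives h : C_i(M) -> N.  The map g sending each word to the
   corresponding element of C_i(M) is Lambda-linear (by uniqueness in the universal
   property of Lambda, applied to two representations of Lambda on N (+) C_i(M)), so
   g \o h = id by uniqueness in the tensor product, while h \o g = id on words by
   induction on their length.  Finally N 1_i = M, and for j <> i, N 1_j is the free
   A_j-module on the n_j elements m (x) b_1 a_1 ... a_r b_(r+1) 1_j. *)

From HB Require Import structures.
From mathcomp Require Import all_boot all_order all_algebra.
From mathcomp Require Import falgebra.
Import GRing.Theory.

Set Implicit Arguments. Unset Strict Implicit. Unset Printing Implicit Defensive.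

Section QuiverPaths.
Variables (V E : finType) (s t : E -> V).

Definition qend (x : V) (p : seq E) : V := last x (map t p).

Lemma qpath_qend x y p : is_qpath s t x y p -> y = qend x p.
Proof. by elim: p x => [|b p IH] x /=; [move/eqP | case/andP=> _ /IH]. Qed.

Lemma qpath_rcons x y p e :
  is_qpath s t x y (rcons p e) = is_qpath s t x (s e) p && (t e == y).
Proof. by elim: p x => [|b p IH] x /=; rewrite ?IH ?andbA // eq_sym. Qed.

Lemma qend_rcons x p e : qend x (rcons p e) = t e.
Proof. by rewrite /qend map_rcons last_rcons. Qed.

Lemma qpath_take x y p n :
  is_qpath s t x y p -> is_qpath s t x (qend x (take n p)) (take n p).
Proof. by elim: p x n => [|b p IH] x [|n] //= /andP[-> /IH]; apply. Qed.

Lemma acyclic_qpath_uniq x y p :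
  acyclic s t -> is_qpath s t x y p -> uniq (x :: map t p).
Proof.
move=> ac; elim: p x => [|b p IH] x //= /andP[sb qp].
move: (IH _ qp) => /= ->; rewrite andbT; apply/negP => x_in.
set q := b :: p; set n := index x (map t q).
have q_path : is_qpath s t x y q by rewrite /= sb.
have n_lt : n < size q by rewrite -(size_map t) index_mem.
have loop_end : qend x (take n.+1 q) = x.
  by rewrite /qend map_take (take_nth x) ?size_map // last_rcons nth_index.
have := qpath_take n.+1 q_path; rewrite loop_end; apply/negP/ac.
by rewrite (take_nth b n_lt) -size_eq0 size_rcons.
Qed.

Lemma acyclic_qpath_size x y p : acyclic s t -> is_qpath s t x y p -> size p < #|V|.
Proof.
move=> ac /(acyclic_qpath_uniq ac) /card_uniqP.
by rewrite /= size_map => <-; exact: max_card.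
Qed.

Lemma acyclic_qpath_loop x p : acyclic s t -> is_qpath s t x x p -> p = [::].
Proof. by move=> ac; case: p => // b p; apply: contraTeq => _; apply: ac. Qed.

End QuiverPaths.

Lemma all2_rcons (T1 T2 : Type) (r : T1 -> T2 -> bool) s1 s2 x1 x2 :
  size s1 = size s2 -> all2 r (rcons s1 x1) (rcons s2 x2) = all2 r s1 s2 && r x1 x2.
Proof.
elim: s1 s2 => [|y1 s1 IH] [|y2 s2] //=; first by rewrite andbT.
by case=> /IH ->; rewrite andbA.
Qed.

Lemma all2_size (T1 T2 : Type) (r : T1 -> T2 -> bool) s1 s2 :
  all2 r s1 s2 -> size s1 = size s2.
Proof. by rewrite all2E => /andP[/eqP]. Qed.

Section Enumerations.
Variables (V E : finType) (s t : E -> V) (i : V) (dM : nat) (dA : V -> nat).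

Fixpoint coord_seqs (q : seq E) : seq (seq nat) :=
  if q is b :: q' then [seq u :: us | u <- iota 0 (dA (s b)), us <- coord_seqs q']
  else [:: [::]].

Lemma size_coord_seqs q : size (coord_seqs q) = (\prod_(b <- q) dA (s b))%N.
Proof.
elim: q => [|b q IH]; first by rewrite big_nil.
by rewrite /= size_allpairs size_iota IH big_cons.
Qed.

Lemma uniq_coord_seqs q : uniq (coord_seqs q).
Proof.
elim: q => [|b q IH] //=; apply: allpairs_uniq => //; first exact: iota_uniq.
by move=> [u1 us1] [u2 us2] _ _ /= [-> ->].
Qed.

Lemma mem_coord_seqs q us :
  (us \in coord_seqs q) = all2 (fun u b => u < dA (s b)) us q.
Proof.
elim: q us => [|b q IH] [|u us] //=.
- by apply/allpairsP => -[[? ?] [_ _ /=]].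
- apply/allpairsP/andP => [[[x y] [/= xi yi [-> ->]]]|[ub usq]].
    by rewrite -IH yi mem_iota /= in xi *.
  by exists (u, us); rewrite mem_iota /= ub IH usq.
Qed.

Definition tuple_seqs (r : nat) : seq (seq E) := [seq val p | p : r.-tuple E].

Lemma mem_tuple_seqs r p : (p \in tuple_seqs r) = (size p == r).
Proof.
apply/mapP/eqP => [[q _ ->]|<-]; first exact: size_tuple.
by exists (in_tuple p); rewrite ?mem_enum.
Qed.

Lemma uniq_tuple_seqs r : uniq (tuple_seqs r).
Proof. by rewrite map_inj_uniq ?enum_uniq //; apply: val_inj. Qed.

(* Bounding the length by #|V| loses nothing in an acyclic quiver (acyclic_qpath_size). *)
Definition qpaths (j : V) : seq (seq E) :=
  [seq p | r <- iota 1 #|V|, p <- [seq q <- tuple_seqs r | is_qpath s t i j q]].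

Lemma mem_qpaths j p :
  (p \in qpaths j) = [&& 0 < size p, size p <= #|V| & is_qpath s t i j p].
Proof.
apply/allpairsPdep/and3P => [[r [q [r_in]]]|[p_gt0 p_le p_path]].
  rewrite mem_filter mem_tuple_seqs => /andP[q_path /eqP q_r] ->.
  by rewrite mem_iota q_r add1n ltnS in r_in *; case/andP: r_in => -> ->.
exists (size p), p; split => //; first by rewrite mem_iota p_gt0 add1n ltnS.
by rewrite mem_filter p_path mem_tuple_seqs eqxx.
Qed.

Lemma uniq_qpaths j : uniq (qpaths j).
Proof.
apply: allpairs_uniq_dep; first exact: iota_uniq.
  by move=> r _; rewrite filter_uniq // uniq_tuple_seqs.
move=> [r1 p1] [r2 p2] /allpairsPdep[? [? [_ + [-> ->]]]]
                     /allpairsPdep[? [? [_ + [-> ->]]]] /= e.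
by rewrite !mem_filter !mem_tuple_seqs => /andP[_ /eqP <-] /andP[_ /eqP <-]; rewrite e.
Qed.

(* A generator (p, (t0, us)) of the component at j of the cone stands for
   m_t0 (x) p_1 a_1 p_2 ... a_r p_(r+1), with p = [:: p_1; ...; p_(r+1)] a path
   from i to j, m_t0 the t0-th basis vector of M and a_l the us_l-th basis
   vector of the algebra at the source of p_(l+1). *)
Definition gen := (seq E * (nat * seq nat))%type.

Definition gens (j : V) : seq gen :=
  [seq (p, tu) | p <- qpaths j,
     tu <- [seq (t0, us) | t0 <- iota 0 dM, us <- coord_seqs (behead p)]].

Definition valid_gen (j : V) (fw : gen) : bool :=
  [&& fw.1 \in qpaths j, fw.2.1 < dM & fw.2.2 \in coord_seqs (behead fw.1)].

Lemma mem_gens j fw : (fw \in gens j) = valid_gen j fw.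
Proof.
case: fw => p [t0 us]; rewrite /valid_gen /=.
apply/allpairsPdep/and3P => [[q [[x y] [q_in /allpairsP[[a b] [/= a_in b_in eab] e]]]]|[]].
  by case: eab => ? ?; case: e => ? ? ?; subst; rewrite mem_iota in a_in.
move=> p_in t0_lt us_in; exists p, (t0, us); split => //.
by apply/allpairsP; exists (t0, us); rewrite mem_iota.
Qed.

Lemma uniq_gens j : uniq (gens j).
Proof.
apply: allpairs_uniq_dep; first exact: uniq_qpaths.
  move=> p _; apply: allpairs_uniq; [exact: iota_uniq|exact: uniq_coord_seqs|].
  by move=> [? ?] [? ?] _ _ /= [-> ->].
by move=> [? ?] [? ?] _ _ /= [-> ->].
Qed.

Lemma valid_gen_qend j fw : valid_gen j fw -> j = qend t i fw.1.
Proof. by case/and3P; rewrite mem_qpaths => /and3P[_ _ /qpath_qend]. Qed.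

Lemma gens_no_qpath j : (forall p, ~~ is_qpath s t i j p) -> gens j = [::].
Proof.
move=> no_path; case: (gens j) (mem_gens j) => [//|fw r] /(_ fw); rewrite mem_head.
by case/esym/and3P; rewrite mem_qpaths (negbTE (no_path _)) !andbF.
Qed.

Lemma ncoef0 j : ncoef s t 0 dA i j = 0%N.
Proof. by rewrite /ncoef big1 // => r _; rewrite big1. Qed.

Lemma size_gens j : j != i -> size (gens j) = ncoef s t dM dA i j.
Proof.
move=> ji; rewrite size_allpairs_dep sumnE big_map /ncoef /qpaths big_allpairs_dep /=.
rewrite -(big_mkord xpredT (fun r => \sum_(p : r.-tuple E | is_qpath s t i j p)
                                        (dM * \prod_(b <- behead p) dA (s b)))%N).
rewrite big_nat_recl // [X in (X + _)%N]big1 => [|p]; first last.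
  by rewrite tuple0 /= eq_sym (negbTE ji).
rewrite add0n -{1}[1%N]addn0 iotaDl big_map /index_iota subn0.
apply: eq_bigr => r _; rewrite add1n big_filter big_map big_enum_cond /=.
by apply: eq_bigr => p _; rewrite size_allpairs size_iota size_coord_seqs.
Qed.

(* A word is a basis vector of the model of the cone: either inl t0, the
   t0-th basis vector of M, or inr (fw, u), the generator fw times the u-th
   basis vector of the algebra at its end. *)
Definition word := (nat + gen * nat)%type.

Definition words : seq word :=
  [seq inl t0 | t0 <- iota 0 dM] ++
  [seq inr fwu | j <- enum V, fwu <- [seq (fw, u) | fw <- gens j, u <- iota 0 (dA j)]].

Definition word_end (w : word) : V :=
  if w is inr (fw, _) then qend t i fw.1 else i.

Definition valid_word (w : word) : bool :=
  match w with
  | inl t0 => t0 < dM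
  | inr (fw, u) => valid_gen (qend t i fw.1) fw && (u < dA (qend t i fw.1))
  end.

Lemma mem_words w : (w \in words) = valid_word w.
Proof.
rewrite mem_cat; case: w => [t0|[fw u]] /=.
  rewrite mem_map ?mem_iota ?add0n; last by move=> ? ? [].
  by case: allpairsPdep => [[? [? [_ _ ?]]]|]; rewrite ?orbF.
rewrite [X in X || _](_ : _ = false) /=; last by apply/mapP => -[].
apply/allpairsPdep/andP => [[j [[fw' u'] [_ /allpairsP[[a b] [/= a_in b_in eab]] e]]]|].
  case: eab => ? ?; case: e => ? ?; subst.
  rewrite mem_gens in a_in; rewrite -(valid_gen_qend a_in) a_in.
  by rewrite mem_iota in b_in.
case=> fw_val u_lt; exists (qend t i fw.1), (fw, u); rewrite mem_enum.
by split => //; apply/allpairsP; exists (fw, u); rewrite mem_gens fw_val mem_iota.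
Qed.

Definition extend (e : E) (w : word) : gen :=
  match w with
  | inl t0 => ([:: e], (t0, [::]))
  | inr ((p, (t0, us)), u) => (rcons p e, (t0, rcons us u))
  end.

Lemma qend_extend e w : qend t i (extend e w).1 = t e.
Proof. by case: w => [t0|[[p [t0 us]] u]] //=; rewrite qend_rcons. Qed.

Lemma valid_extend e w :
  acyclic s t -> valid_word w -> word_end w = s e -> valid_gen (t e) (extend e w).
Proof.
move=> ac; case: w => [t0|[[p [t0 us]] u]] /=.
  move=> t0_lt i_se; rewrite /valid_gen /= t0_lt mem_qpaths /= i_se !eqxx inE.
  by rewrite !andbT; apply/card_gt0P; exists i.
case/andP => /and3P[/= p_in t0_lt us_in] u_lt p_end.
move: p_in; rewrite mem_qpaths => /and3P[p_gt0 _ p_path].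
rewrite /valid_gen /= t0_lt mem_qpaths size_rcons qpath_rcons eqxx andbT.
have p_path' : is_qpath s t i (s e) p by rewrite -p_end.
rewrite p_path' (acyclic_qpath_size ac p_path) /=.
case: p p_gt0 p_path p_path' us_in u_lt p_end => [//|b p] _ _ _ us_in u_lt p_end.
rewrite mem_coord_seqs in us_in.
by rewrite /= mem_coord_seqs all2_rcons ?(all2_size us_in) // us_in -p_end u_lt.
Qed.

Definition word_size (w : word) : nat := if w is inr (fw, _) then size fw.1 else 0.

Lemma valid_word_extend fw u : valid_word (inr (fw, u)) ->
  exists e w, [/\ valid_word w, word_end w = s e, fw = extend e w
                & word_size w < size fw.1].
Proof.
case: fw => p [t0 us] /= /andP[/and3P[/= p_in t0_lt us_in] u_lt].
move: p_in; rewrite mem_qpaths => /and3P[].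
case/lastP: p us_in u_lt => [//|p e] us_in u_lt _ p_le.
rewrite qpath_rcons => /andP[p_path _].
case: p p_le us_in u_lt p_path => [|b p] p_le us_in u_lt p_path.
  move: us_in => /= /predU1P[->|//].
  by exists e, (inl t0); split => //=; move: p_path => /= /eqP.
move: us_in; case/lastP: us => [|us u']; first by rewrite mem_coord_seqs; case: (p).
rewrite /= mem_coord_seqs.
have [sz|nsz] := eqVneq (size us) (size p); last first.
  by move/all2_size; rewrite !size_rcons => -[/eqP]; rewrite (negbTE nsz).
rewrite all2_rcons // -mem_coord_seqs => /andP[us_in u'_lt].
exists e, (inr ((b :: p, (t0, us)), u')); split => //=; last by rewrite size_rcons.
  rewrite -(qpath_qend p_path) /valid_gen /= t0_lt us_in u'_lt mem_qpaths p_path.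
  by rewrite !andbT /=; move: p_le; rewrite size_rcons => /ltnW.
by rewrite -(qpath_qend p_path).
Qed.

Lemma valid_word_end_neq fw u :
  acyclic s t -> valid_word (inr (fw, u)) -> word_end (inr (fw, u)) != i.
Proof.
move=> ac /= /andP[/and3P[]]; rewrite mem_qpaths => /and3P[p_gt0 _ p_path] _ _ _.
apply/eqP => p_end; rewrite p_end in p_path.
by move: p_gt0; rewrite (acyclic_qpath_loop ac p_path).
Qed.

End Enumerations.

Local Open Scope ring_scope.

Section LinMap.
Variables (k : fieldType) (U W : lmodType k) (f : U -> W).
Hypothesis f_lin : lin_map f.

Lemma lin_map0 : f 0 = 0.
Proof. by apply: (addrI (f 0)); have := f_lin 1 0 0; rewrite !scale1r !addr0 => <-. Qed.

Lemma lin_mapD x y : f (x + y) = f x + f y.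
Proof. by have := f_lin 1 x y; rewrite !scale1r. Qed.

Lemma lin_mapZ c x : f (c *: x) = c *: f x.
Proof. by have := f_lin c x 0; rewrite !addr0 lin_map0 addr0. Qed.

Lemma lin_map_sum (I : Type) (r : seq I) (F : I -> U) :
  f (\sum_(j <- r) F j) = \sum_(j <- r) f (F j).
Proof. by elim: r => [|a r IH]; rewrite ?big_nil ?big_cons ?lin_map0 // lin_mapD IH. Qed.

End LinMap.

Lemma lfun_lin_map (k : fieldType) (U W : vectType k) (f : 'Hom(U, W)) : lin_map f.
Proof. by move=> c x y; rewrite linearP. Qed.

Section RightModule.
Variables (k : fieldType) (R : algType k) (X : rmod R).

Lemma ract_linl_map r : lin_map (fun x : X => ract x r).
Proof. by move=> c x y; rewrite ract_linl. Qed.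

Lemma ract0l r : ract (0 : X) r = 0.
Proof. exact: lin_map0 (ract_linl_map r). Qed.

Lemma ractDl (x y : X) r : ract (x + y) r = ract x r + ract y r.
Proof. exact: (lin_mapD (ract_linl_map r)). Qed.

Lemma ractNl (x : X) r : ract (- x) r = - ract x r.
Proof. by rewrite -scaleN1r (lin_mapZ (ract_linl_map r)) scaleN1r. Qed.

End RightModule.

Section EndomorphismAlgebra.
Variables (k : fieldType) (N : vectType k) (N_proper : (0 < dim N)%N).

(* The product of lfun_algType is f * g = g \o f, so N is a right module over it. *)
Definition end_alg : algType k := lfun_algType N_proper.

Lemma end_mulE (f g : end_alg) (x : N) : (f * g) x = g (f x).
Proof. by rewrite /GRing.mul /= lfunE. Qed.

Lemma end_oneE (x : N) : (1 : end_alg) x = x.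
Proof. by rewrite /GRing.one /= lfunE. Qed.

Lemma end_addE (f g : end_alg) (x : N) : (f + g) x = f x + g x.
Proof. by rewrite /GRing.add /= lfunE. Qed.

Lemma end_zeroE (x : N) : (0 : end_alg) x = 0.
Proof. by rewrite /GRing.zero /= lfunE. Qed.

Lemma end_scaleE c (f : end_alg) (x : N) : (c *: f) x = c *: f x.
Proof. by rewrite /GRing.scale /= lfunE. Qed.

Lemma end_sumE (I : Type) (r : seq I) (F : I -> end_alg) (x : N) :
  (\sum_(j <- r) F j) x = \sum_(j <- r) F j x.
Proof.
elim: r => [|a r IH]; rewrite ?big_nil ?big_cons ?end_zeroE //.
by rewrite end_addE IH.
Qed.

End EndomorphismAlgebra.

Lemma dim_gt0 (k : fieldType) (W : vectType k) (x : W) : x != 0 -> (0 < dim W)%N.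
Proof.
move=> x_neq0; rewrite -dimvf lt0n dimv_eq0; apply: contraNneq x_neq0 => W0.
by move: (memvf x); rewrite W0 memv0.
Qed.

Section Basis.
Variables (k : fieldType) (W : vectType k).

Definition bdim : nat := \dim {:W}.
Local Notation n := bdim.

Definition bvec (u : nat) : W := (vbasis {:W})`_u.
Definition bcoord (u : 'I_n) (x : W) : k := coord (vbasis {:W}) u x.

Lemma bcoord_expand x : x = \sum_(u < n) bcoord u x *: bvec u.
Proof. exact: coord_vbasis (memvf x). Qed.

Lemma bcoord_bvec (u u' : 'I_n) : bcoord u' (bvec u) = (u == u')%:R.
Proof. by rewrite /bcoord /bvec coord_free // (basis_free (vbasisP _)). Qed.

Lemma bcoordD u x y : bcoord u (x + y) = bcoord u x + bcoord u y.
Proof. exact: linearD. Qed.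

Lemma bcoordZ u c x : bcoord u (c *: x) = c * bcoord u x.
Proof. exact: linearZ. Qed.

Lemma bcoord_sum u (I : Type) (r : seq I) (F : I -> W) :
  bcoord u (\sum_(j <- r) F j) = \sum_(j <- r) bcoord u (F j).
Proof. exact: linear_sum. Qed.

Lemma bcoord_comb (c : 'I_n -> k) u : bcoord u (\sum_(u' < n) c u' *: bvec u') = c u.
Proof.
rewrite bcoord_sum (bigD1 u) //= big1 ?addr0 => [|u' u'_neq].
  by rewrite bcoordZ bcoord_bvec eqxx mulr1.
by rewrite bcoordZ bcoord_bvec (negbTE u'_neq) mulr0.
Qed.

Lemma bcoord_eq0 x : (forall u, bcoord u x = 0) -> x = 0.
Proof. by move=> x0; rewrite (bcoord_expand x) big1 // => u _; rewrite x0 scale0r. Qed.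

Lemma bdim0_eq0 (x : W) : bdim = 0%N -> x = 0.
Proof. by move=> n0; apply: bcoord_eq0 => u; have := leq_trans (ltn_ord u) (eq_leq n0). Qed.

End Basis.

Section Model.
Variables (k : fieldType) (V E : finType) (s t : E -> V) (A : V -> falgType k)
  (i : V) (M : rmod (A i)).

Local Notation dM := (bdim M).
Local Notation dA v := (bdim (A v)).
Local Notation word := (word E).
Local Notation words := (words s t i dM (fun v => dA v)).
Local Notation valid_word := (valid_word s t i dM (fun v => dA v)).
Local Notation valid_gen := (valid_gen s t i dM (fun v => dA v)).
Local Notation word_end := (word_end t i).
Local Notation qend := (qend t).

Definition windex := seq_sub words.
Definition model := {ffun windex -> k^o}.

Definition wvec (w : word) : model := [ffun y : windex => ((ssval y == w)%:R : k^o)].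

Lemma model_scaleE c (f : model) y : (c *: f) y = c * f y.
Proof. exact: ffunE. Qed.
Lemma model_addE (f g : model) y : (f + g) y = f y + g y.
Proof. exact: ffunE. Qed.
Lemma model_zeroE y : (0 : model) y = 0.
Proof. exact: ffunE. Qed.

Lemma wvecE w (y : windex) : wvec w y = (ssval y == w)%:R.
Proof. exact: ffunE. Qed.

Lemma valid_windex (y : windex) : valid_word (ssval y).
Proof. by rewrite -mem_words (ssvalP y). Qed.

Lemma wvec_invalid w : ~~ valid_word w -> wvec w = 0.
Proof.
move=> w_inv; apply/ffunP => y; rewrite wvecE model_zeroE.
by case: eqP => // yw; move: (valid_windex y); rewrite yw (negbTE w_inv).
Qed.

Lemma model_expand (phi : model) : phi = \sum_(y : windex) phi y *: wvec (ssval y).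
Proof.
apply/ffunP => y0; rewrite sum_ffunE (bigD1 y0) //= big1 ?addr0.
  by rewrite model_scaleE wvecE eqxx mulr1.
move=> y y_neq; rewrite model_scaleE wvecE (inj_eq val_inj) eq_sym.
by rewrite (negbTE y_neq) mulr0.
Qed.

Lemma lin_map_wvec_ext (W : lmodType k) (f g : model -> W) : lin_map f -> lin_map g ->
  (forall w, valid_word w -> f (wvec w) = g (wvec w)) -> f =1 g.
Proof.
move=> f_lin g_lin fg phi; rewrite (model_expand phi).
rewrite (lin_map_sum f_lin) (lin_map_sum g_lin); apply: eq_bigr => y _.
by rewrite (lin_mapZ f_lin) (lin_mapZ g_lin) fg ?valid_windex.
Qed.

Lemma lfun_wvec_ext (f g : 'End(model)) :
  (forall w, valid_word w -> f (wvec w) = g (wvec w)) -> f = g.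
Proof. by move=> fg; apply/lfunP/lin_map_wvec_ext => //; apply: lfun_lin_map. Qed.

Definition wext_fun (F : word -> model) (phi : model) : model :=
  \sum_(y : windex) phi y *: F (ssval y).

Fact wext_fun_is_linear F : linear (wext_fun F).
Proof.
move=> c x y; rewrite /wext_fun scaler_sumr -big_split /=; apply: eq_bigr => z _.
by rewrite model_addE model_scaleE scalerDl scalerA.
Qed.

HB.instance Definition _ F := GRing.isSemilinear.Build k model model _ (wext_fun F)
  (GRing.semilinear_linear (wext_fun_is_linear F)).

Definition wext (F : word -> model) : 'End(model) := linfun (wext_fun F).

Lemma wext_wvec F w : valid_word w -> wext F (wvec w) = F w.
Proof.
move=> w_val; have w_in : w \in words by rewrite mem_words.
rewrite lfunE /= /wext_fun (bigD1 (SeqSub w_in)) //= big1 ?addr0.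
  by rewrite wvecE eqxx scale1r.
move=> y y_neq; rewrite wvecE; case: eqP => [yw|]; last by rewrite scale0r.
by move: y_neq; rewrite -(inj_eq val_inj) /= yw eqxx.
Qed.

Definition cast_to_i v (a : A v) : A i :=
  if v =P i is ReflectT e then eq_rect v A a i e else 0.

Lemma cast_to_i_id (a : A i) : cast_to_i a = a.
Proof. by rewrite /cast_to_i; case: eqP => // e; rewrite (eq_axiomK e). Qed.

Definition mvec (m : M) : model := \sum_(t0 < dM) bcoord t0 m *: wvec (inl (t0 : nat)).

Lemma mvec_lin : lin_map mvec.
Proof.
move=> c x y; rewrite /mvec scaler_sumr -big_split; apply: eq_bigr => u _ /=.
by rewrite bcoordD bcoordZ scalerDl scalerA.
Qed.

Lemma mvec_bvec (t0 : 'I_dM) : mvec (bvec M t0) = wvec (inl (t0 : nat)).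
Proof.
rewrite /mvec (bigD1 t0) //= big1 ?addr0 ?bcoord_bvec ?eqxx ?scale1r // => u u_neq.
by rewrite bcoord_bvec eq_sym (negbTE u_neq) scale0r.
Qed.

Definition gvec v (fw : gen E) (x : A v) : model :=
  \sum_(u < dA v) bcoord u x *: wvec (inr (fw, (u : nat))).

Lemma gvec_lin v fw : lin_map (@gvec v fw).
Proof.
move=> c x y; rewrite /gvec scaler_sumr -big_split; apply: eq_bigr => u _ /=.
by rewrite bcoordD bcoordZ scalerDl scalerA.
Qed.

Lemma gvec_bvec v fw (u : 'I_(dA v)) : gvec fw (bvec (A v) u) = wvec (inr (fw, (u : nat))).
Proof.
rewrite /gvec (bigD1 u) //= big1 ?addr0 ?bcoord_bvec ?eqxx ?scale1r // => u' u'_neq.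
by rewrite bcoord_bvec eq_sym (negbTE u'_neq) scale0r.
Qed.

Lemma valid_word_gen v fw (u : 'I_(dA v)) : valid_gen v fw -> valid_word (inr (fw, (u : nat))).
Proof. by move=> fw_val; rewrite /= -(valid_gen_qend fw_val) fw_val ltn_ord. Qed.

Definition act_word v (a : A v) (w : word) : model :=
  match w with
  | inl t0 => if v == i then mvec (ract (bvec M t0) (cast_to_i a)) else 0
  | inr (fw, u) => if qend i fw.1 == v then gvec fw (bvec (A v) u * a) else 0
  end.

Definition arrow_word (e : E) (w : word) : model :=
  if word_end w == s e then gvec (extend e w) (1 : A (t e)) else 0.

Definition model_act v (a : A v) : 'End(model) := wext (act_word a).
Definition model_arrow e : 'End(model) := wext (arrow_word e).

Lemma model_act_wvec v (a : A v) w : valid_word w -> model_act a (wvec w) = act_word a w.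
Proof. exact: wext_wvec. Qed.

Lemma model_arrow_wvec e w : valid_word w -> model_arrow e (wvec w) = arrow_word e w.
Proof. exact: wext_wvec. Qed.

Lemma model_act_mvec (a : A i) m : model_act a (mvec m) = mvec (ract m a).
Proof.
rewrite {1}/mvec (lin_map_sum (lfun_lin_map _)) {2}(bcoord_expand m).
rewrite (lin_map_sum (ract_linl_map _)) (lin_map_sum mvec_lin); apply: eq_bigr => t0 _ /=.
rewrite (lin_mapZ (lfun_lin_map _)) model_act_wvec //= eqxx cast_to_i_id.
by rewrite (lin_mapZ (ract_linl_map _)) (lin_mapZ mvec_lin).
Qed.

Lemma model_act_mvec_neq v (a : A v) m : v != i -> model_act a (mvec m) = 0.
Proof.
move=> vi; rewrite /mvec (lin_map_sum (lfun_lin_map _)) big1 // => t0 _.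
by rewrite (lin_mapZ (lfun_lin_map _)) model_act_wvec //= (negbTE vi) scaler0.
Qed.

Lemma model_act_gvec v fw (x a : A v) :
  valid_gen v fw -> model_act a (gvec fw x) = gvec fw (x * a).
Proof.
move=> fw_val; rewrite {2}(bcoord_expand x) mulr_suml (lin_map_sum (@gvec_lin v fw)).
rewrite {1}/gvec (lin_map_sum (lfun_lin_map _)); apply: eq_bigr => u _.
rewrite (lin_mapZ (lfun_lin_map _)) model_act_wvec ?(valid_word_gen u fw_val) //=.
by rewrite -(valid_gen_qend fw_val) eqxx -scalerAl (lin_mapZ (@gvec_lin v fw)).
Qed.

Lemma model_act_gvec_neq v v' fw (x : A v) (a : A v') :
  qend i fw.1 != v' -> model_act a (gvec fw x) = 0.
Proof.
move=> fw_end; rewrite /gvec (lin_map_sum (lfun_lin_map _)) big1 // => u _.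
have [w_val|w_inv] := boolP (valid_word (inr (fw, (u : nat)))).
  by rewrite (lin_mapZ (lfun_lin_map _)) model_act_wvec //= (negbTE fw_end) scaler0.
by rewrite wvec_invalid // scaler0 (lin_map0 (lfun_lin_map _)).
Qed.

Lemma act_word1 v w :
  valid_word w -> act_word (1 : A v) w = if word_end w == v then wvec w else 0.
Proof.
case: w => [t0|[fw u]] /= w_val.
  rewrite eq_sym; case: eqP => // <-.
  by rewrite cast_to_i_id ract1 (mvec_bvec (Ordinal w_val)).
case: eqP => // <-; rewrite mulr1.
by case/andP: w_val => _ u_lt; rewrite (gvec_bvec _ (Ordinal u_lt)).
Qed.

Lemma act_word_lin v w : lin_map (fun a : A v => act_word a w).
Proof.
move=> c x y; case: w => [t0|[fw u]] /=.
  case: eqP => [vi|_]; last by rewrite scaler0 addr0.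
  by subst v; rewrite !cast_to_i_id ract_linr (lin_mapD mvec_lin) (lin_mapZ mvec_lin).
case: eqP => [_|_]; last by rewrite scaler0 addr0.
by rewrite mulrDr -scalerAr (lin_mapD (gvec_lin fw)) (lin_mapZ (gvec_lin fw)).
Qed.

Lemma model_proper : (0 < dM)%N -> (0 < dim model)%N.
Proof.
move=> dM_gt0; have w_in : (inl 0%N : word) \in words by rewrite mem_words.
apply: (@dim_gt0 _ _ (wvec (inl 0%N))); apply/eqP => /ffunP/(_ (SeqSub w_in)).
by rewrite wvecE model_zeroE eqxx => /eqP; rewrite oner_eq0.
Qed.

Lemma sum_wvecE n (c : 'I_n -> k) (f : 'I_n -> word) (y : windex) u :
  injective f -> ssval y = f u -> (\sum_(u' < n) c u' *: wvec (f u')) y = c u.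
Proof.
move=> f_inj yu; rewrite sum_ffunE (bigD1 u) //= big1 ?addr0.
  by rewrite model_scaleE wvecE yu eqxx mulr1.
move=> u' u'_neq; rewrite model_scaleE wvecE yu (inj_eq f_inj) eq_sym.
by rewrite (negbTE u'_neq) mulr0.
Qed.

Lemma sum_wvecE0 n (c : 'I_n -> k) (f : 'I_n -> word) (y : windex) :
  (forall u, ssval y != f u) -> (\sum_(u < n) c u *: wvec (f u)) y = 0.
Proof.
move=> y_neq; rewrite sum_ffunE big1 // => u _.
by rewrite model_scaleE wvecE (negbTE (y_neq u)) mulr0.
Qed.

Lemma inl_inj n : injective (fun u : 'I_n => inl (u : nat) : word).
Proof. by move=> u1 u2 [/val_inj]. Qed.

Lemma inr_inj n fw : injective (fun u : 'I_n => inr (fw, (u : nat)) : word).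
Proof. by move=> u1 u2 [/val_inj]. Qed.

Lemma mvec_inj : injective mvec.
Proof.
move=> m1 m2 eq_m; apply/eqP; rewrite -subr_eq0; apply/eqP/bcoord_eq0 => t0.
have w_in : (inl (t0 : nat) : word) \in words by rewrite mem_words /=.
have := congr1 (fun phi : model => phi (SeqSub w_in)) eq_m.
rewrite /mvec !(sum_wvecE _ (@inl_inj _) (u := t0)) // => eq_t0.
by rewrite bcoordD -scaleN1r bcoordZ eq_t0 mulN1r subrr.
Qed.

Definition wcoord (phi : model) (w : word) : k := if insub w is Some y then phi y else 0.

Lemma wcoord_val phi (y : windex) : wcoord phi (ssval y) = phi y.
Proof. by rewrite /wcoord valK. Qed.

Lemma model_act1E v phi (y : windex) :
  model_act (1 : A v) phi y = if word_end (ssval y) == v then phi y else 0.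
Proof.
rewrite [in LHS](model_expand phi) (lin_map_sum (lfun_lin_map _)) sum_ffunE.
rewrite (bigD1 y) //= big1 ?addr0 => [|y' y'_neq].
  rewrite (lin_mapZ (lfun_lin_map _)) model_act_wvec ?act_word1 ?valid_windex //.
  by case: eqP; rewrite model_scaleE ?wvecE ?eqxx ?mulr1 ?model_zeroE ?mulr0.
rewrite (lin_mapZ (lfun_lin_map _)) model_act_wvec ?act_word1 ?valid_windex //.
case: eqP; rewrite model_scaleE ?model_zeroE ?mulr0 // wvecE (inj_eq val_inj).
by rewrite eq_sym (negbTE y'_neq) mulr0.
Qed.

Definition mproj (phi : model) : M := \sum_(t0 < dM) wcoord phi (inl (t0 : nat)) *: bvec M t0.

Hypothesis ac : acyclic s t.
Hypothesis dM_gt0 : (0 < dM)%N.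

Lemma model_gpa_data :
  gpa_data s t (fun v (a : A v) => model_act a : end_alg (model_proper dM_gt0))
               (fun e => model_arrow e : end_alg (model_proper dM_gt0)).
Proof.
split; [|split; [|split; [|split]]].
- move=> v c x y; apply: lfun_wvec_ext => w w_val.
  by rewrite end_addE end_scaleE !model_act_wvec //; apply: act_word_lin.
- move=> v x y; apply: lfun_wvec_ext => w w_val.
  rewrite end_mulE !model_act_wvec //; case: w w_val => [t0|[fw u]] /= w_val.
    case: eqP => [vi|_]; last by rewrite linear0.
    by subst v; rewrite !cast_to_i_id model_act_mvec ractM.
  case: eqP => [fw_end|_]; last by rewrite linear0.
  by subst v; rewrite model_act_gvec ?mulrA //; case/andP: w_val.
- apply: lfun_wvec_ext => w w_val; rewrite end_sumE end_oneE.
  rewrite (bigD1 (word_end w)) //= big1 ?addr0 ?model_act_wvec ?act_word1 ?eqxx //.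
  move=> v v_neq.
  by rewrite model_act_wvec // act_word1 // eq_sym (negbTE v_neq).
- move=> v v' v_neq x y; apply: lfun_wvec_ext => w w_val.
  rewrite end_mulE end_zeroE model_act_wvec //; case: w w_val => [t0|[fw u]] /= w_val.
    case: eqP => [vi|_]; last by rewrite linear0.
    by subst v; rewrite model_act_mvec_neq // eq_sym.
  case: eqP => [fw_end|_]; last by rewrite linear0.
  by rewrite model_act_gvec_neq // fw_end.
- move=> e; apply: lfun_wvec_ext => w w_val.
  rewrite !end_mulE model_act_wvec // act_word1 //.
  case: eqP => [w_end|w_end].
    rewrite model_arrow_wvec // /arrow_word w_end eqxx model_act_gvec ?mulr1 //.
    exact: valid_extend.
  by rewrite !linear0 model_arrow_wvec // /arrow_word; case: eqP.
Qed.

Lemma model_act1_i phi : model_act (1 : A i) phi = mvec (mproj phi).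
Proof.
apply/ffunP => y; rewrite model_act1E /mvec.
case y_val: (ssval y) (valid_windex y) => [t0|[fw u]] w_val.
  rewrite eqxx (sum_wvecE _ (@inl_inj _) (u := Ordinal w_val)) //.
  by rewrite /mproj bcoord_comb -y_val wcoord_val.
by rewrite (negbTE (valid_word_end_neq ac w_val)) sum_wvecE0 // => t0; rewrite y_val.
Qed.

Local Notation gens j := (gens s t i dM (fun v => dA v) j).

Definition gen_at j (l : nat) : gen E := nth ([::], (0%N, [::])) (gens j) l.

Lemma gen_at_valid j (l : 'I_(size (gens j))) : valid_gen j (gen_at j l).
Proof. by rewrite -mem_gens mem_nth. Qed.

Lemma gen_at_inj j : injective (fun l : 'I_(size (gens j)) => gen_at j l).
Proof. by move=> l1 l2 /eqP; rewrite nth_uniq ?uniq_gens // => /eqP/val_inj. Qed.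

Definition gvecs j (a : 'I_(size (gens j)) -> A j) : model :=
  \sum_(l < size (gens j)) gvec (gen_at j l) (a l).

Lemma gvecsE j a (l : 'I_(size (gens j))) (u : 'I_(dA j)) y :
  ssval y = inr (gen_at j l, (u : nat)) -> gvecs a y = bcoord u (a l).
Proof.
move=> y_val; rewrite /gvecs sum_ffunE (bigD1 l) //= big1 ?addr0.
  exact: sum_wvecE (@inr_inj _ _) y_val.
move=> l' l'_neq; apply: sum_wvecE0 => u'; rewrite y_val.
by apply: contra l'_neq => /eqP[/gen_at_inj-> _].
Qed.

Lemma gvecsE0 j (a : 'I_(size (gens j)) -> A j) y :
  (forall (l : 'I_(size (gens j))) (u : 'I_(dA j)), ssval y != inr (gen_at j l, (u : nat))) ->
  gvecs a y = 0.
Proof.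
by move=> y_neq; rewrite /gvecs sum_ffunE big1 // => l _; apply: sum_wvecE0.
Qed.

Lemma gvecs_inj j (a : 'I_(size (gens j)) -> A j) : gvecs a = 0 -> forall l, a l = 0.
Proof.
move=> a0 l; apply: bcoord_eq0 => u.
have w_in : (inr (gen_at j l, (u : nat)) : word) \in words.
  by rewrite mem_words (valid_word_gen u (gen_at_valid l)).
by rewrite -(gvecsE a (y := SeqSub w_in)) // a0 model_zeroE.
Qed.

Definition gproj (j : V) (phi : model) : 'I_(size (gens j)) -> A j :=
  fun l => \sum_(u < dA j) wcoord phi (inr (gen_at j l, (u : nat))) *: bvec (A j) u.

Lemma model_act1_j j phi : j != i -> model_act (1 : A j) phi = gvecs (gproj (j := j) phi).
Proof.
move=> ji; apply/ffunP => y; rewrite model_act1E.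
case: (pickP (fun lu : 'I_(size (gens j)) * 'I_(dA j) =>
                ssval y == inr (gen_at j lu.1, (lu.2 : nat)))) => [[l u] /= /eqP y_val|y_gen].
  rewrite (gvecsE _ y_val) /gproj bcoord_comb -y_val wcoord_val y_val /=.
  by rewrite -(valid_gen_qend (gen_at_valid l)) eqxx.
rewrite gvecsE0 => [|l u]; last by rewrite (y_gen (l, u)).
case: eqP => // y_end.
case y_val: (ssval y) (valid_windex y) y_end => [t0|[fw u]] w_val /= y_end.
  by rewrite y_end eqxx in ji.
case/andP: w_val; rewrite y_end -mem_gens => fw_in u_lt.
have := y_gen (Ordinal (etrans (index_mem _ _) fw_in), Ordinal u_lt).
by rewrite /= y_val /gen_at nth_index // eqxx.
Qed.

End Model.

Section GpaData.
Variables (k : fieldType) (V E : finType) (s t : E -> V) (A : V -> falgType k)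
  (L : algType k) (emb : forall v, A v -> L) (arr : E -> L).
Arguments emb : clear implicits.
Hypothesis gd : gpa_data s t emb arr.

Lemma emb_lin v : lin_map (emb v).
Proof. by case: gd. Qed.

Lemma embM v (x y : A v) : emb v (x * y) = emb v x * emb v y.
Proof. by case: gd => _ []. Qed.

Lemma sum_emb1 : \sum_v emb v 1 = 1.
Proof. by case: gd => _ [_ []]. Qed.

Lemma emb_orth v w (x : A v) (y : A w) : v != w -> emb v x * emb w y = 0.
Proof. by case: gd => _ [_ [_ [emb_o _]]] /emb_o; apply. Qed.

Lemma emb_arr_emb e : emb (s e) 1 * arr e * emb (t e) 1 = arr e.
Proof. by case: gd => _ [_ [_ [_ ->]]]. Qed.

Lemma arr_emb e : arr e * emb (t e) 1 = arr e.
Proof. by rewrite -{1}emb_arr_emb -mulrA -embM mulr1 emb_arr_emb. Qed.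

Lemma emb_arr e : emb (s e) 1 * arr e = arr e.
Proof. by rewrite -{1}emb_arr_emb !mulrA -embM mulr1 emb_arr_emb. Qed.

Lemma emb_arr_neq v (x : A v) e : v != s e -> emb v x * arr e = 0.
Proof. by move=> ve; rewrite -emb_arr mulrA emb_orth // mul0r. Qed.

Lemma gpa_data_comp (B : algType k) (G : L -> B) :
  alg_hom G -> gpa_data s t (fun v x => G (emb v x)) (fun e => G (arr e)).
Proof.
case=> G_lin [GM G1]; case: gd => emb_l [embM' [emb1 [emb_o emb_a]]].
split; [|split; [|split; [|split]]].
- by move=> v c x y; rewrite emb_l (lin_mapD G_lin) (lin_mapZ G_lin).
- by move=> v x y; rewrite embM' GM.
- by rewrite -(lin_map_sum G_lin) emb1 G1.
- by move=> v w vw x y; rewrite -GM emb_o // (lin_map0 G_lin).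
- by move=> e; rewrite -!GM emb_a.
Qed.

End GpaData.

Section Intertwining.
Variables (k : fieldType) (V E : finType) (s t : E -> V) (A : V -> falgType k)
  (L : falgType k) (emb : forall v, A v -> L) (arr : E -> L).
Arguments emb : clear implicits.
Hypothesis gpa : is_gpa s t emb arr.
Variables (N : vectType k) (N_proper : (0 < dim N)%N) (rho : L -> end_alg N_proper).
Hypothesis rho_hom : alg_hom rho.
Variables (X : rmod L) (g : N -> X).
Hypothesis g_lin : lin_map g.
Hypothesis g_emb : forall v (a : A v) x, g (rho (emb v a) x) = ract (g x) (emb v a).
Hypothesis g_arr : forall e x, g (rho (arr e) x) = ract (g x) (arr e).

Local Notation P := (N * X)%type.

Lemma rho_lin l : lin_map (rho l : 'End(N)).
Proof. exact: lfun_lin_map. Qed.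

Lemma rhoE c l l' x : (rho (c *: l + l') : 'End(N)) x = c *: rho l x + rho l' x.
Proof. by case: rho_hom => -> _; rewrite end_addE end_scaleE. Qed.

Lemma rhoM l l' x : (rho (l * l') : 'End(N)) x = rho l' (rho l x).
Proof. by case: rho_hom => _ [-> _]; rewrite end_mulE. Qed.

Lemma rho1 x : (rho 1 : 'End(N)) x = x.
Proof. by case: rho_hom => _ [_ ->]; rewrite end_oneE. Qed.

Definition defect l (x : N) : X := g (rho l x) - ract (g x) l.

Lemma defect_lin l : lin_map (defect l).
Proof.
move=> c x y; rewrite /defect (rho_lin l c x y) g_lin g_lin ract_linl.
by rewrite scalerBr opprD addrACA.
Qed.

Lemma defectD c l l' x : defect (c *: l + l') x = c *: defect l x + defect l' x.
Proof. by rewrite /defect rhoE g_lin ract_linr scalerBr opprD addrACA. Qed.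

Lemma defectM l l' x : defect (l * l') x = defect l' (rho l x) + ract (defect l x) l'.
Proof. by rewrite /defect rhoM -ractM ractDl ractNl addrA addrNK. Qed.

(* sum_rep and twisted_rep are algebra maps from L that agree on emb and arr; uniqueness
   in the universal property of L then forces defect = 0. *)
Definition sum_rep_fun l (z : P) : P := (rho l z.1, ract z.2 l).
Definition twisted_rep_fun l (z : P) : P := (rho l z.1, ract z.2 l + defect l z.1).

Fact sum_rep_fun_is_linear l : linear (sum_rep_fun l).
Proof.
move=> c [x1 x2] [y1 y2]; congr (_, _); first exact: rho_lin.
by rewrite /= ract_linl.
Qed.

Fact twisted_rep_fun_is_linear l : linear (twisted_rep_fun l).
Proof.
move=> c [x1 x2] [y1 y2]; congr (_, _); first exact: rho_lin.
by rewrite /= ract_linl defect_lin addrACA -scalerDr.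
Qed.

HB.instance Definition _ l := GRing.isSemilinear.Build k P P _ (sum_rep_fun l)
  (GRing.semilinear_linear (sum_rep_fun_is_linear l)).
HB.instance Definition _ l := GRing.isSemilinear.Build k P P _ (twisted_rep_fun l)
  (GRing.semilinear_linear (twisted_rep_fun_is_linear l)).

Let P_proper : (0 < dim P)%N.
Proof. exact: leq_trans N_proper (leq_addr _ _). Qed.

Definition sum_rep l : end_alg P_proper := linfun (sum_rep_fun l).
Definition twisted_rep l : end_alg P_proper := linfun (twisted_rep_fun l).

Lemma sum_rep_hom : alg_hom sum_rep.
Proof.
split; [|split].
- move=> c l l'; apply/lfunP => -[x1 x2]; rewrite end_addE end_scaleE !lfunE.
  by congr (_, _); [exact: rhoE|exact: ract_linr].
- move=> l l'; apply/lfunP => -[x1 x2]; rewrite end_mulE !lfunE.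
  by congr (_, _); [exact: rhoM|rewrite /= ractM].
- apply/lfunP => -[x1 x2]; rewrite end_oneE !lfunE.
  by congr (_, _); [exact: rho1|exact: ract1].
Qed.

Lemma twisted_rep_hom : alg_hom twisted_rep.
Proof.
split; [|split].
- move=> c l l'; apply/lfunP => -[x1 x2]; rewrite end_addE end_scaleE !lfunE.
  congr (_, _); first exact: rhoE.
  by rewrite /= defectD ract_linr addrACA -scalerDr.
- move=> l l'; apply/lfunP => -[x1 x2]; rewrite end_mulE !lfunE.
  congr (_, _); first exact: rhoM.
  by rewrite /= defectM -ractM ractDl [defect _ _ + _]addrC addrA.
- apply/lfunP => -[x1 x2]; rewrite end_oneE !lfunE.
  by congr (_, _); rewrite /= ?rho1 // /defect rho1 !ract1 subrr addr0.
Qed.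

Lemma gpa_intertwine l x : g (rho l x) = ract (g x) l.
Proof.
have [_ uniq_hom] := gpa.2 _ _ _ (gpa_data_comp gpa.1 sum_rep_hom).
have defect0 l' : sum_rep l' = twisted_rep l' -> defect l' x = 0.
  move=> /lfunP/(_ (x, 0)); rewrite !lfunE => -[] /esym /eqP.
  by rewrite addrC -subr_eq0 addrK => /eqP.
apply/eqP; rewrite -subr_eq0; apply/eqP/defect0.
apply: (uniq_hom _ _ sum_rep_hom twisted_rep_hom) => [v a|e].
  apply/lfunP => -[x1 x2]; rewrite !lfunE; congr (_, _) => /=.
  by rewrite /defect g_emb subrr addr0.
apply/lfunP => -[x1 x2]; rewrite !lfunE; congr (_, _) => /=.
by rewrite /defect g_arr subrr addr0.
Qed.

End Intertwining.

Section Cone.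
Variables (k : fieldType) (V E : finType) (s t : E -> V) (A : V -> falgType k)
  (L : falgType k) (emb : forall v, A v -> L) (i : V) (M : rmod (A i))
  (X : rmod L) (tau : M -> L -> X).
Arguments emb : clear implicits.
Hypothesis cone : is_cone emb tau.

Lemma tau_linl l : lin_map (tau^~ l).
Proof. by case: cone => -[tau_l _] _ c x y; apply: tau_l. Qed.

Lemma tau_linr m : lin_map (tau m).
Proof. by case: cone => -[_ tau_r] _ c x y; apply: tau_r. Qed.

Lemma tau_ract a m l : tau (ract m a) l = tau m (emb i a * l).
Proof. by case: cone => _ [[-> _] _]. Qed.

Lemma tau_emb_neq v a m l : v != i -> tau m (emb v a * l) = 0.
Proof. by case: cone => _ [[_ tau_b] _] vi; apply: tau_b. Qed.

Lemma tauM m l l' : tau m (l * l') = ract (tau m l) l'.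
Proof. by case: cone => _ [_ []]. Qed.

Lemma cone_ext (W : lmodType k) (h1 h2 : X -> W) : lin_map h1 -> lin_map h2 ->
  (forall m l, h1 (tau m l) = h2 (tau m l)) -> h1 =1 h2.
Proof.
case: cone => _ [_ [_ univ]] h1_lin h2_lin h12.
have [||_ uniq_map] := univ W (fun _ _ => 0); last exact: uniq_map.
  by split=> * /=; rewrite scaler0 addr0.
by split.
Qed.

Lemma cone_trivial : (forall m : M, m = 0) -> forall y : X, y = 0.
Proof.
move=> M0; apply: (cone_ext (h2 := fun _ => 0)) => [c x y|c x y|m l] //.
  by rewrite scaler0 addr0.
by rewrite (M0 m) (lin_map0 (tau_linl l)).
Qed.

Variable arr : E -> L.
Hypothesis gd : gpa_data s t emb arr.

Lemma tau_emb_i m l : tau m l = tau m (emb i 1 * l).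
Proof.
rewrite -{1}[l]mul1r -(sum_emb1 gd) mulr_suml (lin_map_sum (tau_linr m)).
by rewrite (bigD1 i) //= big1 ?addr0 // => v vi; apply: tau_emb_neq.
Qed.

Lemma tau_i_ract m a : tau (ract m a) (emb i 1) = ract (tau m (emb i 1)) (emb i a).
Proof. by rewrite tau_ract -tauM -!(embM gd) mulr1 mul1r. Qed.

End Cone.

Section ConeModel.
Variables (k : fieldType) (V E : finType) (s t : E -> V) (A : V -> falgType k)
  (L : falgType k) (emb : forall v, A v -> L) (arr : E -> L)
  (i : V) (M : rmod (A i)) (X : rmod L) (tau : M -> L -> X).
Arguments emb : clear implicits.
Hypothesis ac : acyclic s t.
Hypothesis gpa : is_gpa s t emb arr.
Hypothesis cone : is_cone emb tau.
Hypothesis dM_gt0 : (0 < bdim M)%N.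

Local Notation dM := (bdim M).
Local Notation dA v := (bdim (A v)).
Local Notation word := (word E).
Local Notation valid_word := (valid_word s t i dM (fun v => dA v)).
Local Notation valid_gen := (valid_gen s t i dM (fun v => dA v)).
Local Notation word_end := (word_end t i).
Local Notation qend := (qend t).
Local Notation model := (model s t M).
Local Notation windex := (windex s t M).
Local Notation wvec := (wvec s t M).
Local Notation mvec := (mvec s t (M := M)).
Local Notation gvec := (gvec s t M).
Local Notation model_act := (model_act s t M).
Local Notation model_arrow := (model_arrow s t M).

Let gd : gpa_data s t emb arr := gpa.1.

Fixpoint path_elt (q : seq E) (us : seq nat) : L :=
  if q is b :: q' then
    emb (s b) (bvec (A (s b)) (head 0%N us)) * arr b * path_elt q' (behead us)
  else 1.

Definition gen_elt (fw : gen E) : L :=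
  if fw.1 is b :: q then emb i 1 * arr b * path_elt q fw.2.2 else emb i 1.

Definition word_elt (w : word) : L :=
  if w is inr (fw, u) then gen_elt fw * emb (qend i fw.1) (bvec _ u) else emb i 1.

Definition word_mindex (w : word) : nat :=
  match w with inl t0 => t0 | inr (fw, _) => fw.2.1 end.

Definition word_image (w : word) : X := tau (bvec M (word_mindex w)) (word_elt w).

Definition to_cone (phi : model) : X := \sum_(y : windex) phi y *: word_image (ssval y).

Lemma to_cone_lin : lin_map to_cone.
Proof.
move=> c x y; rewrite /to_cone scaler_sumr -big_split /=; apply: eq_bigr => z _.
by rewrite model_addE model_scaleE scalerDl scalerA.
Qed.

Lemma to_cone_wvec w : valid_word w -> to_cone (wvec w) = word_image w.
Proof.
move=> w_val; have w_in : w \in words s t i dM (fun v => dA v) by rewrite mem_words.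
rewrite /to_cone (bigD1 (SeqSub w_in)) //= big1 ?addr0 ?wvecE /= ?eqxx ?scale1r //.
move=> y y_neq; rewrite wvecE; case: eqP => [yw|]; last by rewrite scale0r.
by move: y_neq; rewrite -(inj_eq val_inj) /= yw eqxx.
Qed.

Lemma to_cone_mvec m : to_cone (mvec m) = tau m (emb i 1).
Proof.
rewrite /mvec (lin_map_sum to_cone_lin) {2}(bcoord_expand m) (lin_map_sum (tau_linl cone _)).
apply: eq_bigr => t0 _; rewrite (lin_mapZ to_cone_lin) to_cone_wvec /= ?ltn_ord //.
by rewrite (lin_mapZ (tau_linl cone _)).
Qed.

Lemma to_cone_gvec v fw (x : A v) : valid_gen v fw ->
  to_cone (gvec fw x) = tau (bvec M fw.2.1) (gen_elt fw * emb v x).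
Proof.
move=> fw_val; have fw_end := valid_gen_qend fw_val; subst v.
rewrite /gvec (lin_map_sum to_cone_lin) {2}(bcoord_expand x).
rewrite (lin_map_sum (emb_lin gd (v := _))) mulr_sumr (lin_map_sum (tau_linr cone _)).
apply: eq_bigr => u _.
rewrite (lin_mapZ to_cone_lin) to_cone_wvec ?(valid_word_gen u fw_val) //.
by rewrite (lin_mapZ (emb_lin gd (v := _))) -scalerAr (lin_mapZ (tau_linr cone _)).
Qed.

Lemma path_elt_rcons q us e u : size us = size q ->
  path_elt (rcons q e) (rcons us u) = path_elt q us * emb (s e) (bvec (A (s e)) u) * arr e.
Proof.
elim: q us => [|b q IH] [|u' us] //= => [_|[/IH ->]]; last by rewrite !mulrA.
by rewrite mulr1 mul1r.
Qed.

Lemma word_elt_end w : exists Z (z : A (word_end w)), word_elt w = Z * emb (word_end w) z.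
Proof.
case: w => [t0|[fw u]] /=; first by exists 1, 1; rewrite mul1r.
by exists (gen_elt fw), (bvec (A (qend i fw.1)) u).
Qed.

Lemma gen_elt_extend e w : valid_word w -> word_end w = s e ->
  gen_elt (extend e w) = word_elt w * arr e.
Proof.
case: w => [t0|[[p [t0 us]] u]] /=; first by rewrite /gen_elt /= mulr1.
case/andP => /and3P[/= p_in _ us_in] _ p_end.
move: p_in; rewrite mem_qpaths; case: p p_end us_in => [|b q] p_end us_in /and3P[//= _ _ _].
rewrite mem_coord_seqs in us_in.
by rewrite /gen_elt /= path_elt_rcons ?(all2_size us_in) // !mulrA p_end.
Qed.

Lemma word_mindex_extend e w : (extend e w).2.1 = word_mindex w.
Proof. by case: w => [t0|[[p [t0 us]] u]]. Qed.

Lemma to_cone_act v (a : A v) phi : to_cone (model_act a phi) = ract (to_cone phi) (emb v a).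
Proof.
apply: (lin_map_wvec_ext (f := fun phi => to_cone (model_act a phi))
                         (g := fun phi => ract (to_cone phi) (emb v a))).
- by move=> c x y; rewrite (lfun_lin_map _) to_cone_lin.
- by move=> c x y; rewrite to_cone_lin ract_linl.
move=> w w_val; rewrite model_act_wvec // to_cone_wvec // /word_image.
case: w w_val => [t0|[fw u]] w_val /=.
  case: eqP => [vi|vi].
    by subst v; rewrite cast_to_i_id to_cone_mvec (tau_i_ract cone gd).
  rewrite (lin_map0 to_cone_lin) -(tauM cone) (emb_orth gd) 1?eq_sym; last exact/eqP.
  by rewrite (lin_map0 (tau_linr cone _)).
case/andP: w_val => fw_val _; case: eqP => [fw_end|fw_end].
  by subst v; rewrite to_cone_gvec // -(tauM cone) -mulrA -(embM gd).
rewrite (lin_map0 to_cone_lin) -(tauM cone) -mulrA (emb_orth gd) ?mulr0; last exact/eqP.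
by rewrite (lin_map0 (tau_linr cone _)).
Qed.

Lemma to_cone_arrow e phi : to_cone (model_arrow e phi) = ract (to_cone phi) (arr e).
Proof.
apply: (lin_map_wvec_ext (f := fun phi => to_cone (model_arrow e phi))
                         (g := fun phi => ract (to_cone phi) (arr e))).
- by move=> c x y; rewrite (lfun_lin_map _) to_cone_lin.
- by move=> c x y; rewrite to_cone_lin ract_linl.
move=> w w_val; rewrite model_arrow_wvec // to_cone_wvec // /word_image /arrow_word.
case: eqP => [w_end|w_end].
  rewrite to_cone_gvec; last exact: valid_extend.
  by rewrite -(tauM cone) gen_elt_extend // -mulrA (arr_emb gd) word_mindex_extend.
have [Z [z ->]] := word_elt_end w.
rewrite (lin_map0 to_cone_lin) -(tauM cone) -mulrA (emb_arr_neq gd) ?mulr0; last exact/eqP.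
by rewrite (lin_map0 (tau_linr cone _)).
Qed.

Variable rho : L -> end_alg (model_proper s t dM_gt0).
Hypothesis rho_hom : alg_hom rho.
Hypothesis rho_emb : forall v (a : A v), rho (emb v a) = model_act a.
Hypothesis rho_arr : forall e, rho (arr e) = model_arrow e.

Lemma to_cone_rho l phi : to_cone (rho l phi) = ract (to_cone phi) l.
Proof.
apply: (gpa_intertwine gpa rho_hom to_cone_lin) => [v a x|e x].
  by rewrite rho_emb to_cone_act.
by rewrite rho_arr to_cone_arrow.
Qed.

Definition model_tau (m : M) (l : L) : model := rho l (mvec m).

Lemma model_tau_bilin : bilin model_tau.
Proof.
split=> [l c x y|m c l l']; rewrite /model_tau; first by rewrite mvec_lin (rho_lin _ l).
by rewrite (rhoE rho_hom).
Qed.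

Lemma model_tau_balanced : balanced emb model_tau.
Proof.
split=> [a m l|v vi a m l]; rewrite /model_tau (rhoM rho_hom) rho_emb.
  by rewrite model_act_mvec.
by rewrite model_act_mvec_neq // (lin_map0 (rho_lin _ l)).
Qed.

Variable to_model : X -> model.
Hypothesis to_model_lin : lin_map to_model.
Hypothesis to_model_tau : forall m l, to_model (tau m l) = model_tau m l.

Lemma to_model_ract y l : to_model (ract y l) = rho l (to_model y).
Proof.
apply: (cone_ext cone (h1 := fun y => to_model (ract y l))
                      (h2 := fun y => rho l (to_model y))).
- by move=> c x z; rewrite ract_linl to_model_lin.
- by move=> c x z; rewrite to_model_lin (rho_lin _ l).
by move=> m l'; rewrite -(tauM cone) !to_model_tau /model_tau (rhoM rho_hom).
Qed.

Lemma to_modelK : cancel to_model to_cone.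
Proof.
apply: (cone_ext cone (h1 := fun y => to_cone (to_model y)) (h2 := id)) => //.
- by move=> c x z; rewrite to_model_lin to_cone_lin.
move=> m l; rewrite to_model_tau to_cone_rho to_cone_mvec.
by rewrite -(tauM cone) -(tau_emb_i cone gd).
Qed.

Lemma rho_word_elt w :
  valid_word w -> rho (word_elt w) (mvec (bvec M (word_mindex w))) = wvec w.
Proof.
elim: {w}(word_size w).+1 {-2}w (ltnSn (word_size w)) => [//|n IH].
case=> [t0|[fw u]] w_lt w_val /=.
  by rewrite rho_emb model_act_mvec ract1 (mvec_bvec s t (Ordinal w_val)).
have [e [w' [w'_val w'_end fw_ext w'_lt]]] := valid_word_extend w_val; subst fw.
have u_lt : (u < dA (t e))%N by case/andP: w_val => _; rewrite qend_extend.
move: w_val; rewrite /= qend_extend => w_val.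
rewrite gen_elt_extend // word_mindex_extend !(rhoM rho_hom) IH ?(leq_trans w'_lt) //.
rewrite rho_arr rho_emb model_arrow_wvec // /arrow_word w'_end eqxx.
by rewrite model_act_gvec ?mul1r ?(gvec_bvec s t M _ (Ordinal u_lt)) //; case/andP: w_val.
Qed.

Lemma to_coneK : cancel to_cone to_model.
Proof.
apply: (lin_map_wvec_ext (f := fun phi => to_model (to_cone phi)) (g := id)) => //.
- by move=> c x z; rewrite to_cone_lin to_model_lin.
by move=> w w_val; rewrite to_cone_wvec // /word_image to_model_tau /model_tau rho_word_elt.
Qed.

Lemma to_model_tau_i m : to_model (tau m (emb i 1)) = mvec m.
Proof. by rewrite to_model_tau /model_tau rho_emb model_act_mvec ract1. Qed.

Lemma cone_i_inj m1 m2 : tau m1 (emb i 1) = tau m2 (emb i 1) -> m1 = m2.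
Proof. by move/(congr1 to_model); rewrite !to_model_tau_i; apply: mvec_inj. Qed.

Lemma cone_i_onto y : in_comp (emb i 1) y -> exists m, y = tau m (emb i 1).
Proof.
case=> z ->; exists (mproj (to_model z)).
by rewrite -[LHS]to_modelK to_model_ract rho_emb (model_act1_i ac) to_cone_mvec.
Qed.

Local Notation gens j := (gens s t i dM (fun v => dA v) j).

Definition gen_image j (l : 'I_(size (gens j))) : X :=
  to_cone (gvec (gen_at s t M j l) (1 : A j)).

Lemma ract_gen_image j (l : 'I_(size (gens j))) (a : A j) :
  ract (gen_image l) (emb j a) = to_cone (gvec (gen_at s t M j l) a).
Proof.
by rewrite /gen_image -to_cone_rho rho_emb model_act_gvec ?mul1r ?gen_at_valid.
Qed.

Lemma cone_j_basis j : j != i ->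
  exists x : 'I_(size (gens j)) -> X,
    (forall l, in_comp (emb j 1) (x l)) /\
    (forall a : 'I_(size (gens j)) -> A j,
       \sum_l ract (x l) (emb j (a l)) = 0 -> forall l, a l = 0) /\
    (forall y : X, in_comp (emb j 1) y ->
       exists a : 'I_(size (gens j)) -> A j, y = \sum_l ract (x l) (emb j (a l))).
Proof.
move=> ji; have sum_ract a : \sum_l ract (gen_image l) (emb j (a l)) = to_cone (gvecs a).
  by rewrite /gvecs (lin_map_sum to_cone_lin); apply: eq_bigr => l _; rewrite ract_gen_image.
exists (@gen_image j); split; [|split].
- by move=> l; exists (gen_image l); rewrite ract_gen_image.
- move=> a; rewrite sum_ract => /(congr1 to_model); rewrite to_coneK (lin_map0 to_model_lin).
  exact: gvecs_inj.
- move=> y [z ->]; exists (gproj (j := j) (to_model z)).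
  by rewrite sum_ract -(model_act1_j _ ji) -[LHS]to_modelK to_model_ract rho_emb.
Qed.

Lemma cone_j_no_path j : j != i -> (forall p, ~~ is_qpath s t i j p) ->
  forall y : X, in_comp (emb j 1) y -> y = 0.
Proof.
move=> ji no_path y y_in; have [x [_ [_ x_span]]] := cone_j_basis ji.
have [a ->] := x_span y y_in; apply: big1 => l _.
by exfalso; move: l; rewrite gens_no_qpath // => -[].
Qed.

End ConeModel.

Theorem mainTheorem6 (k : closedFieldType) (V E : finType) (s t : E -> V)
  (A : V -> falgType k) (L : falgType k) (emb : forall v, A v -> L) (arr : E -> L)
  (i : V) (M : rmod (A i)) (X : rmod L) (tau : M -> L -> X) :
  acyclic s t ->
  (forall v, basic (A v)) ->
  is_gpa s t emb arr ->
  is_cone emb tau ->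
  (* M_i = M, via the natural map m |-> m (x) 1_i, an iso of A_i-modules *)
  ((forall m1 m2 : M, tau m1 (emb i 1) = tau m2 (emb i 1) -> m1 = m2) /\
   (forall y : X, in_comp (emb i 1) y -> exists m : M, y = tau m (emb i 1)) /\
   (forall (m : M) (a : A i),
      tau (ract m a) (emb i 1) = ract (tau m (emb i 1)) (emb i a))) /\
  (* for j <> i, M_j is isomorphic to A_j^(n_j) as a right A_j-module *)
  (forall j : V, j != i ->
     let n := ncoef s t (\dim (fullv : {vspace M})) (fun v => \dim (fullv : {vspace A v})) i j in
     exists x : 'I_n -> X,
       (forall l, in_comp (emb j 1) (x l)) /\
       (forall a : 'I_n -> A j,
          \sum_(l < n) ract (x l) (emb j (a l)) = 0 -> forall l, a l = 0) /\
       (forall y : X, in_comp (emb j 1) y ->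
          exists a : 'I_n -> A j, y = \sum_(l < n) ract (x l) (emb j (a l)))) /\
  (* in particular M_j = 0 if there is no path from i to j *)
  (forall j : V, j != i -> (forall p : seq E, ~~ is_qpath s t i j p) ->
     forall y : X, in_comp (emb j 1) y -> y = 0).
Proof.
move=> ac _ gpa cone.
(* end_alg needs a nonzero model, so the case M = 0 is treated apart. *)
have [dM0|dM_gt0] := posnP (bdim M).
  have X0 := cone_trivial cone (fun m => bdim0_eq0 m dM0).
  have X_eq (y y' : X) : y = y' by rewrite (X0 y) (X0 y').
  split; [split; [|split]|split] => [m1 m2 _|y _|m a|j _ n|j _ _ y _].
  - by rewrite (bdim0_eq0 m1 dM0) (bdim0_eq0 m2 dM0).
  - by exists 0; apply: X_eq.
  - exact: X_eq.
  - have n0 : n = 0%N by rewrite /n -[\dim _]/(bdim M) dM0 ncoef0.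
    exists (fun _ => 0); split; [|split] => [l|a _ l|y _]; first by exists 0; rewrite ract0l.
      by move: (ltn_ord l); rewrite {2}n0.
    by exists (fun _ => 0); apply: X_eq.
  - exact: X0.
have [[rho [rho_hom [rho_emb rho_arr]]] _] := gpa.2 _ _ _ (model_gpa_data ac dM_gt0).
have [[h [h_lin h_tau]] _] :=
  cone.2.2.2 _ _ (model_tau_bilin rho_hom) (model_tau_balanced rho_hom rho_emb).
split; [split; [|split]|split].
- exact: (cone_i_inj rho_emb h_tau).
- exact: (cone_i_onto ac gpa cone rho_hom rho_emb rho_arr h_lin h_tau).
- exact: (tau_i_ract cone gpa.1).
- move=> j ji n; rewrite /n -size_gens //.
  exact: (cone_j_basis ac gpa cone rho_hom rho_emb rho_arr h_lin h_tau ji).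
- exact: (cone_j_no_path ac gpa cone rho_hom rho_emb rho_arr h_lin h_tau).
Qed.
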